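(* Let $n\geq 1$ be a natural number and let $T$ be a complete theory which is $n$-transitive and not $(n+1)$-transitive. Then $T$ is not $n$-ary.
   Context: For a natural number $m$, a complete theory $T$ is $m$-transitive if every complete type $q(x_1,\ldots,x_m)\in S(T)$ is forced (modulo $T$) by its restriction to the empty language, i.e. by the formulas of $q$ built only from equalities $x_i\approx x_j$. For $n\geq 1$, a formula of $T$ is $n$-ary if it is $T$-equivalent to a Boolean combination of $T$-formulas each having at most $n$ free variables. $T$ is unary ($1$-ary) if every $T$-formula is $T$-equivalent to a Boolean combination of $T$-formulas with one free variable and formulas $x\approx y$; for $n\geq 2$, $T$ is $n$-ary if every $T$-formula is $n$-ary. *)

From mathcomp Require Import all_boot.
From Stdlib Require Import List.



Unset Printing Implicit Defensive.

(* A first-order signature: function symbols (constants = arity 0) and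
   relation symbols, each with an arity. *)
Record signature := Signature {
  funs : Type;
  rels : Type;
  fun_ar : funs -> nat;
  rel_ar : rels -> nat }.

Section FOL.
Variable L : signature.

Inductive term : Type :=
| tvar : nat -> term
| tapp : forall f : funs L, ('I_(fun_ar L f) -> term) -> term.

Inductive formula : Type :=
| feq : term -> term -> formula
| frel : forall r : rels L, ('I_(rel_ar L r) -> term) -> formula
| fneg : formula -> formula
| fand : formula -> formula -> formula
| fex : nat -> formula -> formula.

Record structure := Structure {
  dom : Type;
  dom_inh : inhabited dom;
  ifun : forall f : funs L, ('I_(fun_ar L f) -> dom) -> dom;
  irel : forall r : rels L, ('I_(rel_ar L r) -> dom) -> Prop }.

Fixpoint teval (M : structure) (a : nat -> dom M) (t : term) : dom M :=
  match t with
  | tvar i => a i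
  | tapp f args => ifun M f (fun k => teval M a (args k))
  end.

Definition update (M : structure) (a : nat -> dom M) (x : nat) (d : dom M) :
  nat -> dom M := fun i => if Nat.eqb i x then d else a i.

Fixpoint sat (M : structure) (a : nat -> dom M) (phi : formula) {struct phi} : Prop :=
  match phi with
  | feq t u => teval M a t = teval M a u
  | frel r args => irel M r (fun k => teval M a (args k))
  | fneg psi => ~ sat M a psi
  | fand psi chi => sat M a psi /\ sat M a chi
  | fex x psi => exists d, sat M (update M a x d) psi
  end.

Inductive tfree (i : nat) : term -> Prop :=
| tfree_var : tfree i (tvar i)
| tfree_app : forall f args (k : 'I_(fun_ar L f)),
    tfree i (args k) -> tfree i (tapp f args).

Fixpoint ffree (i : nat) (phi : formula) : Prop :=
  match phi with
  | feq t u => tfree i t \/ tfree i u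
  | frel r args => exists k, tfree i (args k)
  | fneg psi => ffree i psi
  | fand psi chi => ffree i psi \/ ffree i chi
  | fex x psi => i <> x /\ ffree i psi
  end.

Definition sentence (phi : formula) : Prop := forall i, ~ ffree i phi.

Definition at_most_free (n : nat) (phi : formula) : Prop :=
  exists l : list nat, (length l <= n)%coq_nat /\ forall i, ffree i phi -> In i l.

Definition free_among (m : nat) (phi : formula) : Prop :=
  forall i, ffree i phi -> (i < m)%coq_nat.

Definition theory := formula -> Prop.

Definition is_model (T : theory) (M : structure) : Prop :=
  forall phi, T phi -> forall a, sat M a phi.

(* Semantic consequence modulo T (equivalent to provability by completeness). *)
Definition entails (T : theory) (phi : formula) : Prop :=
  forall M, is_model T M -> forall a, sat M a phi.

Definition complete_theory (T : theory) : Prop :=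
  [/\ (forall phi, T phi -> sentence phi),
      (exists M, is_model T M) &
      (forall phi, sentence phi -> entails T phi \/ entails T (fneg phi))].

(* q is a complete type in the variables x_0, ..., x_(m-1) over T, i.e. q is
   in S_m(T): a set of formulas in these variables, consistent with T, and
   containing phi or its negation for every formula phi in these variables. *)
Definition complete_type (T : theory) (m : nat) (q : formula -> Prop) : Prop :=
  [/\ (forall phi, q phi -> free_among m phi),
      (exists M (a : nat -> dom M), is_model T M /\ forall phi, q phi -> sat M a phi) &
      (forall phi, free_among m phi -> q phi \/ q (fneg phi))].

(* Formulas built only from equalities x_i = x_j (formulas of the empty
   language in the variables). *)
Inductive eq_formula : formula -> Prop :=
| eqf_eq : forall i j, eq_formula (feq (tvar i) (tvar j))
| eqf_neg : forall phi, eq_formula phi -> eq_formula (fneg phi)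
| eqf_and : forall phi psi, eq_formula phi -> eq_formula psi ->
    eq_formula (fand phi psi).

(* q is forced modulo T by its restriction to the empty language. *)
Definition forced_by_eq (T : theory) (q : formula -> Prop) : Prop :=
  forall M, is_model T M -> forall a : nat -> dom M,
    (forall psi, q psi -> eq_formula psi -> sat M a psi) ->
    forall phi, q phi -> sat M a phi.

Definition m_transitive (T : theory) (m : nat) : Prop :=
  forall q, complete_type T m q -> forced_by_eq T q.

Definition T_equiv (T : theory) (phi psi : formula) : Prop :=
  forall M, is_model T M -> forall a : nat -> dom M, sat M a phi <-> sat M a psi.

Inductive bool_comb (S : formula -> Prop) : formula -> Prop :=
| bc_atom : forall phi, S phi -> bool_comb S phi
| bc_neg : forall phi, bool_comb S phi -> bool_comb S (fneg phi)
| bc_and : forall phi psi, bool_comb S phi -> bool_comb S psi ->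
    bool_comb S (fand phi psi).

Definition nary_formula (T : theory) (n : nat) (phi : formula) : Prop :=
  exists psi, bool_comb (at_most_free n) psi /\ T_equiv T phi psi.

Definition unary_theory (T : theory) : Prop :=
  forall phi, exists psi,
    bool_comb (fun chi => at_most_free 1 chi \/
                          exists i j, chi = feq (tvar i) (tvar j)) psi
    /\ T_equiv T phi psi.

Definition nary_theory (T : theory) (n : nat) : Prop :=
  if n == 1 then unary_theory T else forall phi, nary_formula T n phi.

End FOL.

Arguments tvar {L} _.
Arguments tapp {L} _ _.
Arguments feq {L} _ _.
Arguments frel {L} _ _.
Arguments fneg {L} _.
Arguments fand {L} _ _.
Arguments fex {L} _ _.
Arguments sat {L} M a phi.
Arguments teval {L} M a t.
Arguments ffree {L} i phi.
Arguments sentence {L} phi.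
Arguments is_model {L} T M.
Arguments entails {L} T phi.
Arguments complete_theory {L} T.
Arguments complete_type {L} T m q.
Arguments forced_by_eq {L} T q.
Arguments m_transitive {L} T m.
Arguments T_equiv {L} T phi psi.
Arguments nary_formula {L} T n phi.
Arguments unary_theory {L} T.
Arguments nary_theory {L} T n.

(* If T is n-transitive, the truth value of a formula with at most n free
   variables at a tuple depends only on which coordinates of the tuple are
   equal: rename its free variables into x_0, ..., x_(n-1) and use that the
   complete type of the tuple is forced by its equalities.  The same then holds
   for Boolean combinations of such formulas and of equations x_i = x_j.  If T
   were moreover n-ary, every formula would be T-equivalent to such a
   combination, so every complete type, in any number of variables, would be
   forced by its equalities; in particular T would be (n+1)-transitive. *)
From Pilot Require Import Defs.
From mathcomp Require Import all_boot.
From Stdlib Require Import List.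
From Stdlib Require Import Classical FunctionalExtensionality PeanoNat.

Set Implicit Arguments.
Unset Strict Implicit.

Lemma In_mem (j : nat) (l : list nat) : In j l -> j \in l.
Proof.
elim: l => //= x l IH [->|/IH jl]; rewrite inE ?eqxx ?jl ?orbT //.
Qed.

Section FirstOrder.
Variable L : signature.

(* A structural form of [tfree], avoiding dependent inversion on [tapp]. *)
Fixpoint tfree_rec (i : nat) (t : term L) : Prop :=
  match t with
  | tvar j => i = j
  | tapp f args => exists k, tfree_rec i (args k)
  end.

Lemma tfree_recP i t : tfree L i t -> tfree_rec i t.
Proof. by elim=> [|f args k _ IH] //=; exists k. Qed.

Lemma teval_agree (M : structure L) a b t :
  (forall i, tfree L i t -> a i = b i) -> teval M a t = teval M b t.
Proof.
elim: t => [j|f args IH] ab /=; first by apply: ab; constructor.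
congr (ifun _ M f _); apply: functional_extensionality => k.
by apply: IH => i ik; apply: ab; apply: (tfree_app _ _ _ _ k).
Qed.

Lemma sat_agree (M : structure L) phi a b :
  (forall i, ffree i phi -> a i = b i) -> (sat M a phi <-> sat M b phi).
Proof.
elim: phi a b => [t u|r args|p IH|p IHp q IHq|x p IH] a b ab /=.
- by rewrite !(teval_agree (a:=a) (b:=b)) // => i ?;
    apply: ab; by [left|right].
- have -> // : (fun k => teval M a (args k)) = (fun k => teval M b (args k)).
  apply: functional_extensionality => k; apply: teval_agree => i ik.
  by apply: ab; exists k.
- by rewrite (IH _ _ ab).
- by rewrite (IHp a b) ?(IHq a b) // => i ?; apply: ab; by [left|right].
- have upd d : sat M (update _ M a x d) p <-> sat M (update _ M b x d) p.
    apply: IH => i ip; rewrite /update.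
    by case: (Nat.eqb_spec i x) => // ix; apply: ab.
  by split=> -[d pd]; exists d; apply/upd.
Qed.

Fixpoint trename (s : nat -> nat) (t : term L) : term L :=
  match t with
  | tvar i => tvar (s i)
  | tapp f args => tapp f (fun k => trename s (args k))
  end.

Fixpoint frename (s : nat -> nat) (phi : formula L) : formula L :=
  match phi with
  | feq t u => feq (trename s t) (trename s u)
  | Defs.frel r args => Defs.frel r (fun k => trename s (args k))
  | fneg p => fneg (frename s p)
  | fand p q => fand (frename s p) (frename s q)
  | fex x p => fex (s x) (frename s p)
  end.

Lemma teval_trename (M : structure L) a s t :
  teval M a (trename s t) = teval M (a \o s) t.
Proof.
elim: t => [j|f args IH] //=; congr (ifun _ M f _).
exact: functional_extensionality.
Qed.

Lemma tfree_trename s i t :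
  tfree L i (trename s t) -> exists2 j, i = s j & tfree L j t.
Proof.
move/tfree_recP; elim: t => [j|f args IH] /=.
  by move->; exists j => //; constructor.
by case=> k /IH [j -> jk]; exists j => //; apply: (tfree_app _ _ _ _ k).
Qed.

Lemma ffree_frename s phi i :
  ffree i (frename s phi) -> exists2 j, i = s j & ffree j phi.
Proof.
elim: phi i => [t u|r args|p IH|p IHp q IHq|x p IH] i /=.
- by case=> /tfree_trename [j -> ?]; exists j => //; [left|right].
- by case=> k /tfree_trename [j -> ?]; exists j => //; exists k.
- exact: IH.
- by case=> [/IHp|/IHq] [j -> ?]; exists j => //; [left|right].
- by case=> ix /IH [j ij jp]; exists j => //; split=> // jx; apply: ix; subst.
Qed.

(* Injectivity is needed because [frename] also renames bound variables. *)
Lemma sat_frename (M : structure L) s phi a :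
  injective s -> (sat M a (frename s phi) <-> sat M (a \o s) phi).
Proof.
move=> s_inj; elim: phi a => [t u|r args|p IH|p IHp q IHq|x p IH] a /=.
- by rewrite !teval_trename.
- have -> // : (fun k => teval M a (trename s (args k)))
             = (fun k => teval M (a \o s) (args k)).
  by apply: functional_extensionality => k; rewrite teval_trename.
- by rewrite IH.
- by rewrite IHp IHq.
- have upd d : update _ M a (s x) d \o s = update _ M (a \o s) x d.
    apply: functional_extensionality => i; rewrite /update /=.
    case: (Nat.eqb_spec i x) => [->|ix]; first by rewrite Nat.eqb_refl.
    by case: (Nat.eqb_spec (s i) (s x)) => // /s_inj.
  by split=> -[d pd]; exists d; [rewrite -upd -IH|rewrite IH upd].
Qed.

Lemma at_most_free_compress n chi :
  at_most_free L n chi ->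
  exists s t, [/\ injective s, free_among L n (frename s chi)
                & forall j, ffree j chi -> t (s j) = j].
Proof.
case=> l [/leP size_l l_free].
pose l' := undup l.
have size_l' : size l' <= n by apply: leq_trans (size_undup l) size_l.
have chi_l' j : ffree j chi -> j \in l' by rewrite mem_undup => /l_free/In_mem.
have index_lt j : j \in l' -> index j l' < n.
  by move=> jl; apply: leq_trans size_l'; rewrite index_mem.
pose s i := if i \in l' then index i l' else n + i.
exists s, (seq.nth 0 l'); split.
- move=> i j; rewrite /s.
  case: ifP => il; case: ifP => jl.
  + by move=> ij; rewrite -(nth_index 0 il) ij nth_index.
  + by move=> ij; move: (index_lt i il); rewrite ij ltnNge leq_addr.
  + by move=> ij; move: (index_lt j jl); rewrite -ij ltnNge leq_addr.
  + by move/eqP; rewrite eqn_add2l => /eqP.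
- move=> i /ffree_frename [j -> /chi_l' jl]; apply/ltP.
  by rewrite /s jl index_lt.
- by move=> j /chi_l' jl; rewrite /s jl nth_index.
Qed.

Lemma bool_comb_mono (S S' : formula L -> Prop) psi :
  (forall chi, S chi -> S' chi) -> bool_comb L S psi -> bool_comb L S' psi.
Proof. by move=> SS'; elim=> *; constructor; auto. Qed.

Definition same_equalities (M M' : structure L) (c : nat -> dom L M)
    (c' : nat -> dom L M') : Prop :=
  forall i j, c i = c j <-> c' i = c' j.

Variables (M M' : structure L) (c : nat -> dom L M) (c' : nat -> dom L M').

Lemma eq_formula_sat_iff psi :
  same_equalities c c' -> eq_formula L psi ->
  (sat M c psi <-> sat M' c' psi).
Proof.
move=> eq_cc'; elim=> [i j|p _ IH|p q _ IHp _ IHq] /=; first exact: eq_cc'.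
- by rewrite IH.
- by rewrite IHp IHq.
Qed.

Lemma bool_comb_sat_iff (S : formula L -> Prop) psi :
  (forall chi, S chi -> (sat M c chi <-> sat M' c' chi)) ->
  bool_comb L S psi -> (sat M c psi <-> sat M' c' psi).
Proof.
move=> S_iff; elim=> [phi /S_iff //|p _ IH|p q _ IHp _ IHq] /=.
- by rewrite IH.
- by rewrite IHp IHq.
Qed.

End FirstOrder.

Section Transfer.
Variables (L : signature) (T : theory L).

Definition equality_determined : Prop :=
  forall M M' c c', is_model T M -> is_model T M' -> same_equalities c c' ->
    forall phi, sat M c phi <-> sat M' c' phi.

Variables (M M' : structure L).
Hypotheses (MT : is_model T M) (M'T : is_model T M').

(* Apply m-transitivity to the complete type of [c] in [M]. *)
Lemma transitive_sat_iff m c c' theta :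
  m_transitive T m -> same_equalities c c' -> free_among L m theta ->
  (sat M c theta <-> sat M' c' theta).
Proof.
move=> Ttr eq_cc' theta_m.
pose q phi := free_among L m phi /\ sat M c phi.
have q_type : complete_type T m q.
  split; first by move=> phi [].
  - by exists M, c; split=> // phi [].
  - by move=> phi phi_m; case: (classic (sat M c phi)); [left|right].
have q_sat' phi : q phi -> sat M' c' phi.
  apply: (Ttr q q_type M' M'T c') => psi [_ psi_c] psi_eq.
  exact/(eq_formula_sat_iff eq_cc' psi_eq).
split=> [theta_c|theta_c']; first exact: q_sat'.
apply: NNPP => not_theta_c.
exact: (q_sat' (fneg theta) (conj theta_m not_theta_c) theta_c').
Qed.

Lemma transitive_at_most_free_sat_iff n c c' chi :
  m_transitive T n -> same_equalities c c' -> at_most_free L n chi ->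
  (sat M c chi <-> sat M' c' chi).
Proof.
move=> Ttr eq_cc' /at_most_free_compress [s [t [s_inj chi_n ts]]].
have recode N (e : nat -> dom L N) :
    sat N e chi <-> sat N (e \o t) (frename s chi).
  by rewrite sat_frename //; apply: sat_agree => j /ts /= ->.
rewrite (recode M) (recode M').
by apply: transitive_sat_iff chi_n => // i j; apply: eq_cc'.
Qed.

End Transfer.

Definition nary_atom (L : signature) (n : nat) (chi : formula L) : Prop :=
  at_most_free L n chi \/ exists i j, chi = feq (tvar i) (tvar j).

Lemma nary_theory_bool_comb (L : signature) (T : theory L) n phi :
  nary_theory T n ->
  exists2 psi, bool_comb L (nary_atom n) psi & T_equiv T phi psi.
Proof.
rewrite /nary_theory; case: eqP => [-> /(_ phi) [psi [? ?]]|_ /(_ phi)].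
  by exists psi.
case=> psi [psi_comb ?]; exists psi => //.
by apply: bool_comb_mono psi_comb => chi; left.
Qed.

Lemma transitive_nary_equality_determined (L : signature) (T : theory L) n :
  m_transitive T n -> nary_theory T n -> equality_determined T.
Proof.
move=> Ttr Tnary M M' c c' MT M'T eq_cc' phi.
have [psi psi_comb phi_psi] := nary_theory_bool_comb phi Tnary.
rewrite (phi_psi M MT c) (phi_psi M' M'T c').
apply: bool_comb_sat_iff psi_comb => chi [chi_n|[i [j ->]]].
- exact: (transitive_at_most_free_sat_iff MT M'T Ttr eq_cc' chi_n).
- exact: eq_cc'.
Qed.

Lemma equality_determined_transitive (L : signature) (T : theory L) m :
  equality_determined T -> m_transitive T m.
Proof.
move=> Tdet q [q_free [M [a [MT a_q]]] q_compl] M' M'T a' a'_eq phi phi_q.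
have eq_lt i j : i < m -> j < m -> (a i = a j <-> a' i = a' j).
  move=> /ltP im /ltP jm.
  have eq_m : free_among L m (feq (tvar i) (tvar j)).
    by move=> k [] /tfree_recP /= ->.
  have [eq_q|neq_q] := q_compl _ eq_m.
  - by move: (a_q _ eq_q) (a'_eq _ eq_q (eqf_eq _ i j)).
  - by move: (a_q _ neq_q) (a'_eq _ neq_q (eqf_neg _ _ (eqf_eq _ i j))).
(* Values outside x_0, ..., x_(m-1) are irrelevant for [phi]; collapsing them
   onto x_0 makes the equality patterns of [a] and [a'] agree everywhere. *)
pose r k := if k < m then k else 0.
have r_agree N (b : nat -> dom L N) : sat N b phi <-> sat N (b \o r) phi.
  by apply: sat_agree => i /(q_free _ phi_q) /ltP im; rewrite /r /= im.
have eq_r : same_equalities (a \o r) (a' \o r).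
  move=> i j; rewrite /r /=; have [->|m_pos] := posnP m; first by rewrite !ltn0.
  by apply: eq_lt; case: ifP.
apply/r_agree/(Tdet _ _ _ _ MT M'T eq_r)/(r_agree M a); exact: a_q.
Qed.

Theorem proposition1p6 (L : signature) (T : theory L) (n : nat) :
  1 <= n -> complete_theory T -> m_transitive T n -> ~ m_transitive T n.+1 ->
  ~ nary_theory T n.
Proof.
move=> _ _ Ttr not_Ttr1 Tnary; apply: not_Ttr1.
exact/equality_determined_transitive/(transitive_nary_equality_determined Ttr).
Qed.
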